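(* Let $\mathcal H$ be an infinite-dimensional complex Hilbert space and let $\mathcal V_f(\mathcal H)$ be the set of all positive bilinear forms $t$ on $\mathcal H$ with dense domain $D(t)$ such that $D(t)=\mathcal H$ whenever $t$ is bounded. For $t,s\in\mathcal V_f(\mathcal H)$, let $t\oplus s$ be defined if and only if $t$ is bounded, or $s$ is bounded, or $D(t)=D(s)$, and in that case $t\oplus s=t+s$. Then $(\mathcal V_f(\mathcal H);\oplus,o)$ is a generalized effect algebra.
   Context: The inner product is linear in the first argument. A bilinear form $t$ on $\mathcal H$ is a map $t:D(t)\times D(t)\to\mathbb C$, $D(t)$ a dense linear subspace, linear in the first and antilinear in the second argument. $t$ is positive if $t(x,x)\ge0$ for all $x\in D(t)$; bounded if $\sup\{t(x,x)\mid x\in D(t),\|x\|=1\}<\infty$, unbounded otherwise. The sum $t+s$ has domain $D(t)\cap D(s)$ and $(t+s)(x,y)=t(x,y)+s(x,y)$. $o$ denotes the zero form with domain $\mathcal H$. A generalized effect algebra is a structure $(E;\oplus,0)$ with $0\in E$ and a partial binary operation $\oplus$ such that for all $x,y,z\in E$: (i) $x\oplus y=y\oplus x$ if one side is defined; (ii) $(x\oplus y)\oplus z=x\oplus(y\oplus z)$ if one side is defined; (iii) $x\oplus 0$ is defined and equals $x$; (iv) $x\oplus y=x\oplus z$ implies $y=z$; (v) $x\oplus y=0$ implies $x=y=0$. *)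

From mathcomp Require Import all_boot all_order all_algebra.
From mathcomp Require Import boolp classical_sets reals.
From mathcomp.real_closed Require Import complex.
Set Implicit Arguments. Unset Strict Implicit. Unset Printing Implicit Defensive.
Import Order.TTheory GRing.Theory Num.Theory.
Local Open Scope ring_scope.
Local Open Scope classical_set_scope.
Local Open Scope complex_scope.

(* Generalized effect algebra on a carrier set E of a type T, with partial
   operation given by a definedness relation [defd] and the value [op x y]
   (meaningful only when [defd x y]), and distinguished element [zero]. *)
Definition gen_effect_algebra {T : Type} (E : set T) (defd : T -> T -> Prop)
  (op : T -> T -> T) (zero : T) : Prop :=
  E zero /\
  (forall x y, E x -> E y -> defd x y -> E (op x y)) /\
  (forall x y, E x -> E y -> defd x y -> defd y x /\ op x y = op y x) /\
  (forall x y z, E x -> E y -> E z ->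
     (defd x y /\ defd (op x y) z) \/ (defd y z /\ defd x (op y z)) ->
     defd x y /\ defd (op x y) z /\ defd y z /\ defd x (op y z) /\
     op (op x y) z = op x (op y z)) /\
  (forall x, E x -> defd x zero /\ op x zero = x) /\
  (forall x y z, E x -> E y -> E z -> defd x y -> defd x z ->
     op x y = op x z -> y = z) /\
  (forall x y, E x -> E y -> defd x y -> op x y = zero -> x = zero /\ y = zero).

Section Hilbert.
Variables (R : realType) (V : lmodType R[i]) (ip : V -> V -> R[i]).

Definition hnorm (x : V) : R := Num.sqrt (complex.Re (ip x x)).

Definition inner_product : Prop :=
  (forall (a : R[i]) x y z, ip (a *: x + y) z = a * ip x z + ip y z) /\
  (forall x y, ip y x = (ip x y)^*) /\
  (forall x, 0 <= ip x x) /\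
  (forall x, ip x x = 0 -> x = 0).

Definition complete : Prop :=
  forall u : nat -> V,
    (forall e : R, 0 < e -> exists N, forall m n, (N <= m)%N -> (N <= n)%N ->
        hnorm (u m - u n) < e) ->
    exists l : V, forall e : R, 0 < e -> exists N, forall n, (N <= n)%N ->
        hnorm (u n - l) < e.

Definition infinite_dimensional : Prop :=
  forall n : nat, exists v : 'I_n -> V,
    forall c : 'I_n -> R[i], \sum_(i < n) c i *: v i = 0 -> forall i, c i = 0.

Definition inf_dim_complex_hilbert : Prop :=
  inner_product /\ complete /\ infinite_dimensional.

(* Convention: the
   value is 0 whenever an argument lies outside the domain, so that Leibniz
   equality of forms is equality of domains and of values on the domain. *)
Record form := Form { fdom : set V; fval : V -> V -> R[i] }.

Definition dense (D : set V) : Prop :=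
  forall x (e : R), 0 < e -> exists2 y, D y & hnorm (x - y) < e.

Definition subspace (D : set V) : Prop :=
  D 0 /\ (forall (a : R[i]) x y, D x -> D y -> D (a *: x + y)).

(* bilinear form in the sense of the paper (sesquilinear on a dense domain) *)
Definition is_form (t : form) : Prop :=
  subspace (fdom t) /\ dense (fdom t) /\
  (forall (a : R[i]) x y z, fdom t x -> fdom t y -> fdom t z ->
     fval t (a *: x + y) z = a * fval t x z + fval t y z) /\
  (forall (a : R[i]) x y z, fdom t x -> fdom t y -> fdom t z ->
     fval t x (a *: y + z) = (a^*) * fval t x y + fval t x z) /\
  (forall x y, ~ (fdom t x /\ fdom t y) -> fval t x y = 0).

Definition positive_form (t : form) : Prop :=
  forall x, fdom t x -> 0 <= fval t x x.

Definition bounded_form (t : form) : Prop :=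
  exists M : R, forall x, fdom t x -> hnorm x = 1 -> complex.Re (fval t x x) <= M.

Definition Vf : set form :=
  [set t | is_form t /\ positive_form t /\ (bounded_form t -> fdom t = setT)].

Definition form_add (t s : form) : form :=
  Form (fdom t `&` fdom s)
    (fun x y => if `[< (fdom t `&` fdom s) x /\ (fdom t `&` fdom s) y >]
                then fval t x y + fval s x y else 0).

Definition zero_form : form := Form setT (fun _ _ => 0).

Definition oplus_defined (t s : form) : Prop :=
  bounded_form t \/ bounded_form s \/ fdom t = fdom s.

End Hilbert.

From Pilot Require Import Defs.
From mathcomp Require Import all_boot all_order all_algebra.
From mathcomp Require Import boolp classical_sets reals.
From mathcomp.real_closed Require Import complex.
From mathcomp Require Import ring lra.
Set Implicit Arguments. Unset Strict Implicit. Unset Printing Implicit Defensive.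
Import Order.TTheory GRing.Theory Num.Theory.
Local Open Scope ring_scope.
Local Open Scope classical_set_scope.
Local Open Scope complex_scope.

(* Everything except cancellation is bookkeeping with domains, based on two
   facts: a bounded member of V_f(H) is everywhere defined, and a sum of
   positive forms is bounded only if both summands are.  For cancellation,
   t + s = t + r makes s and r agree on D(t) ∩ D(s), which is dense; in the
   hard case s and r are both bounded, hence everywhere defined and continuous
   for the norm, and the Peter-Paul inequality
   q(y + d) <= (1 + l) q(y) + (1 + 1/l) q(d)  for positive quadratic forms
   transports the agreement of q_s and q_r from the dense set to all of H.
   Polarization then gives s = r. *)

(* [Num.Theory] exports another [Re], for [numClosedFieldType]s. *)
Local Notation Re := (@complex.Re _).

Lemma ler_of_forall_sqr1D (R : realFieldType) (a b : R) : 0 <= b ->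
  (forall l, 0 < l -> a <= (1 + l) ^+ 2 * b) -> a <= b.
Proof.
move=> b_ge0 hab; apply/ler_addgt0Pr => e e_gt0.
have den_gt0 : 0 < 3 * b + e by lra.
set l := e / (3 * b + e).
have l_gt0 : 0 < l by rewrite divr_gt0.
have l_le1 : l <= 1 by rewrite ler_pdivrMr // mul1r; lra.
have hl : l * (3 * b + e) = e by rewrite divfK // gt_eqF.
apply: (le_trans (hab l l_gt0)); nra.
Qed.

Section ComplexParts.
Variable R : rcfType.
Implicit Types x y z : R[i].

Lemma ReD x y : Re (x + y) = Re x + Re y.
Proof. by case: x => ? ?; case: y => ? ?. Qed.

Lemma ReN x : Re (- x) = - Re x.
Proof. by case: x. Qed.

Lemma Re_realM (k : R) x : Re (k%:C * x) = k * Re x.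
Proof. by case: x => a b /=; simpc. Qed.

Lemma Re_ge0 z : 0 <= z -> 0 <= Re z.
Proof. by case: z => a b; rewrite lecE /= => /andP[_]. Qed.

Lemma ge0_Re_real z : 0 <= z -> z = (Re z)%:C.
Proof. by case: z => a b; rewrite lecE /= => /andP[/eqP -> _]. Qed.

Lemma conj_real (k : R) : Num.conj k%:C = k%:C.
Proof. by apply/eqP; rewrite eq_complex /= oppr0 !eqxx. Qed.

Lemma conj_i : Num.conj 'i = - 'i :> R[i].
Proof. by apply/eqP; rewrite eq_complex /= oppr0 !eqxx. Qed.

End ComplexParts.

Section Sesquilinear.
Variables (R : rcfType) (V : lmodType R[i]).

Definition sesquilinear (f : V -> V -> R[i]) : Prop :=
  (forall (a : R[i]) x y z, f (a *: x + y) z = a * f x z + f y z) /\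
  (forall (a : R[i]) x y z, f x (a *: y + z) = Num.conj a * f x y + f x z).

Section Theory.
Variables (f : V -> V -> R[i]) (f_sesq : sesquilinear f).

Lemma sesq0l z : f 0 z = 0.
Proof.
have := f_sesq.1 1 0 0 z; rewrite scale1r addr0 mul1r => h.
by apply: (@addrI _ (f 0 z)); rewrite addr0 -h.
Qed.

Lemma sesqDl x y z : f (x + y) z = f x z + f y z.
Proof. by have := f_sesq.1 1 x y z; rewrite scale1r mul1r. Qed.

Lemma sesqDr x y z : f z (x + y) = f z x + f z y.
Proof. by have := f_sesq.2 1 z x y; rewrite scale1r rmorph1 mul1r. Qed.

Lemma sesqZl a x z : f (a *: x) z = a * f x z.
Proof. by have := f_sesq.1 a x 0 z; rewrite addr0 sesq0l addr0. Qed.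

Lemma sesq0r z : f z 0 = 0.
Proof.
have := f_sesq.2 1 z 0 0; rewrite scale1r addr0 rmorph1 mul1r => h.
by apply: (@addrI _ (f z 0)); rewrite addr0 -h.
Qed.

Lemma sesqZr a x z : f z (a *: x) = Num.conj a * f z x.
Proof. by have := f_sesq.2 a z x 0; rewrite addr0 sesq0r addr0. Qed.

Lemma sesqNl x z : f (- x) z = - f x z.
Proof. by apply/eqP; rewrite -addr_eq0 -sesqDl addNr sesq0l. Qed.

Lemma sesqNr x z : f z (- x) = - f z x.
Proof. by rewrite -scaleN1r sesqZr rmorphN rmorph1 mulN1r. Qed.

Lemma sesq_polar : (forall x, f x x = 0) -> forall x y, f x y = 0.
Proof.
move=> f0 x y.
have h1 := f0 (x + y); rewrite sesqDl !sesqDr !f0 add0r addr0 in h1.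
have h2 := f0 (x + 'i *: y); rewrite sesqDl !sesqDr !sesqZl !sesqZr !f0 in h2.
have {}h1 : f y x = - f x y by apply/eqP; rewrite -addr_eq0 addrC h1.
have : (2%:R * 'i) * f x y = 0.
  by rewrite -[RHS]oppr0 -h2 h1 conj_i; ring.
move/eqP; rewrite mulf_eq0 => /orP[|/eqP //].
by rewrite mulf_eq0 pnatr_eq0 /= eq_complex /= oner_eq0 andbF.
Qed.

Lemma sesqNN x : f (- x) (- x) = f x x.
Proof. by rewrite sesqNl sesqNr opprK. Qed.

Lemma sesq_ReZ (k : R) x : Re (f (k%:C *: x) (k%:C *: x)) = k ^+ 2 * Re (f x x).
Proof. by rewrite sesqZl sesqZr conj_real !Re_realM mulrA -expr2. Qed.

Lemma sesq_ReD x y :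
  Re (f (x + y) (x + y)) = Re (f x x) + Re (f y y) + Re (f x y + f y x).
Proof. rewrite sesqDl !sesqDr !ReD; lra. Qed.

Hypothesis f_ge0 : forall x, 0 <= Re (f x x).

Lemma sesq_cross_le (l : R) x y : 0 < l ->
  Re (f x y + f y x) <= l * Re (f x x) + l^-1 * Re (f y y).
Proof.
move=> l_gt0.
have := f_ge0 (l%:C *: x + - y).
rewrite sesq_ReD sesq_ReZ sesqNN sesqNl sesqNr sesqZl sesqZr conj_real.
rewrite -opprD -mulrDr ReN Re_realM => h.
have linv_gt0 : 0 < l^-1 by rewrite invr_gt0.
have := mulr_ge0 (ltW linv_gt0) h.
set b := Re (f x y + f y x); set qx := Re (f x x); set qy := Re (f y y).
have -> : l^-1 * (l ^+ 2 * qx + qy - l * b) = l * qx + l^-1 * qy - b.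
  by field; rewrite gt_eqF.
lra.
Qed.

Lemma sesq_ReD_le (l : R) x y : 0 < l ->
  Re (f (x + y) (x + y)) <= (1 + l) * Re (f x x) + (1 + l^-1) * Re (f y y).
Proof. by move=> l_gt0; have := sesq_cross_le x y l_gt0; rewrite sesq_ReD; lra. Qed.

End Theory.
End Sesquilinear.

Section Hilbert.
Variables (R : realType) (V : lmodType R[i]) (ip : V -> V -> R[i]).
Hypothesis ip_inner : inner_product ip.

Lemma ip_sesquilinear : sesquilinear ip.
Proof.
have conjE (z : R[i]) : Num.conj z = z^*%C by case: z.
have [ipDl [ipC _]] := ip_inner; split=> [//|a x y z].
by rewrite conjE (ipC y x) (ipC z x) [LHS]ipC ipDl rmorphD rmorphM.
Qed.

Lemma ip_Re_ge0 x : 0 <= Re (ip x x).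
Proof. by apply: Re_ge0; case: ip_inner => _ [_ []]. Qed.

Lemma ip_Re_eq0 x : Re (ip x x) = 0 -> x = 0.
Proof.
have [_ [_ [ip_ge0 ip_eq0]]] := ip_inner.
by move=> h; apply: ip_eq0; rewrite (ge0_Re_real (ip_ge0 x)) h.
Qed.

Lemma sesq_Re_le_norm (f : V -> V -> R[i]) (M : R) : sesquilinear f ->
  (forall x, hnorm ip x = 1 -> Re (f x x) <= M) ->
  exists2 K, 0 <= K & forall x, Re (f x x) <= K * Re (ip x x).
Proof.
move=> f_sesq fM; exists `|M| => // x.
have [x0|nx_gt0] := eqVneq (Re (ip x x)) 0.
  by rewrite x0 mulr0 (ip_Re_eq0 x0) sesq0l.
set n := hnorm ip x.
have n2 : n ^+ 2 = Re (ip x x) by rewrite sqr_sqrtr ?ip_Re_ge0.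
have n_gt0 : 0 < n by rewrite sqrtr_gt0 lt_def nx_gt0 ip_Re_ge0.
set u := (n^-1)%:C *: x.
have xE : x = n%:C *: u by rewrite scalerA -rmorphM divff ?gt_eqF // scale1r.
have nu : hnorm ip u = 1.
  rewrite /hnorm (sesq_ReZ ip_sesquilinear) -n2 exprVn mulVf ?sqrtr1 //.
  by rewrite expf_neq0 ?gt_eqF.
rewrite -n2 xE (sesq_ReZ f_sesq) [X in _ <= X]mulrC ler_pM2l ?exprn_gt0 //.
exact: le_trans (fM u nu) (ler_norm M).
Qed.

Section DenseAgreement.
Variables (f g : V -> V -> R[i]) (Kf Kg : R).
Hypotheses (f_sesq : sesquilinear f) (g_sesq : sesquilinear g).
Hypotheses (f_ge0 : forall x, 0 <= Re (f x x)) (g_ge0 : forall x, 0 <= Re (g x x)).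
Hypotheses (Kf_ge0 : 0 <= Kf) (Kg_ge0 : 0 <= Kg).
Hypothesis f_le : forall x, Re (f x x) <= Kf * Re (ip x x).
Hypothesis g_le : forall x, Re (g x x) <= Kg * Re (ip x x).

(* Peter-Paul inequality on [x = y + d] for [f], then on [y = x - d] for [g]. *)
Lemma sesq_Re_le_approx (l : R) x y : 0 < l -> f y y = g y y ->
  Re (f x x) <= (1 + l) ^+ 2 * Re (g x x)
                + (1 + l^-1) * ((1 + l) * Kg + Kf) * Re (ip (x - y) (x - y)).
Proof.
move=> l_gt0 fg_y; set d := x - y.
have hf := sesq_ReD_le f_sesq f_ge0 y d l_gt0.
have hg := sesq_ReD_le g_sesq g_ge0 x (- d) l_gt0.
have xE : y + d = x by rewrite /d addrC subrK.
have yE : x + - d = y by rewrite /d opprB addrCA subrr addr0.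
rewrite xE in hf; rewrite yE (sesqNN g_sesq) -fg_y in hg.
have c_ge0 : 0 <= 1 + l^-1 by rewrite addr_ge0 // invr_ge0 ltW.
have L_ge0 : 0 <= 1 + l by rewrite addr_ge0 // ltW.
have := ler_wpM2l c_ge0 (f_le d).
have := ler_wpM2l L_ge0 (ler_wpM2l c_ge0 (g_le d)).
have := ler_wpM2l L_ge0 hg.
lra.
Qed.

Lemma sesq_Re_le_of_dense (A : set V) : dense ip A ->
  (forall y, A y -> f y y = g y y) -> forall x, Re (f x x) <= Re (g x x).
Proof.
move=> A_dense fg_A x; apply: ler_of_forall_sqr1D (g_ge0 x) _ => l l_gt0.
apply/ler_addgt0Pr => e e_gt0.
set C := (1 + l^-1) * ((1 + l) * Kg + Kf).
have C_ge0 : 0 <= C.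
  have linv_gt0 : 0 < l^-1 by rewrite invr_gt0.
  by rewrite /C; apply: mulr_ge0; [lra | apply: addr_ge0 => //; apply: mulr_ge0 => //; lra].
have eta_gt0 : 0 < e / (C + 1) by rewrite divr_gt0 // ltr_wpDl.
have [y Ay] : exists2 y, A y & hnorm ip (x - y) < Num.sqrt (e / (C + 1)).
  by apply: A_dense; rewrite sqrtr_gt0.
rewrite /hnorm ltr_sqrt // => N_lt.
apply: le_trans (sesq_Re_le_approx x l_gt0 (fg_A y Ay)) _; rewrite lerD2l -/C.
have C1_gt0 : 0 < C + 1 by lra.
have := ler_wpM2l (ltW C1_gt0) (ltW N_lt); rewrite mulrCA divff ?gt_eqF // mulr1.
have := ip_Re_ge0 (x - y); lra.
Qed.

End DenseAgreement.

Lemma sesq_eq_of_dense (f g : V -> V -> R[i]) (A : set V) :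
  sesquilinear f -> sesquilinear g ->
  (forall x, 0 <= f x x) -> (forall x, 0 <= g x x) ->
  (exists M, forall x, hnorm ip x = 1 -> Re (f x x) <= M) ->
  (exists M, forall x, hnorm ip x = 1 -> Re (g x x) <= M) ->
  dense ip A -> (forall y, A y -> f y y = g y y) -> forall x y, f x y = g x y.
Proof.
move=> f_sesq g_sesq f_ge0 g_ge0 [Mf fM] [Mg gM] A_dense fg_A.
have [Kf Kf_ge0 f_le] := sesq_Re_le_norm f_sesq fM.
have [Kg Kg_ge0 g_le] := sesq_Re_le_norm g_sesq gM.
have fRe_ge0 x := Re_ge0 (f_ge0 x); have gRe_ge0 x := Re_ge0 (g_ge0 x).
have fg_diag x : f x x - g x x = 0.
  apply/eqP; rewrite (ge0_Re_real (f_ge0 x)) (ge0_Re_real (g_ge0 x)) subr_eq0; apply/eqP.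
  congr _%:C; apply/le_anti/andP; split.
    exact: (sesq_Re_le_of_dense f_sesq g_sesq fRe_ge0 gRe_ge0 Kf_ge0 Kg_ge0
              f_le g_le A_dense fg_A).
  apply: (sesq_Re_le_of_dense g_sesq f_sesq gRe_ge0 fRe_ge0 Kg_ge0 Kf_ge0
            g_le f_le A_dense).
  by move=> y /fg_A.
have fg_sesq : sesquilinear (fun x y => f x y - g x y).
  by split=> a x y z; rewrite ?f_sesq.1 ?g_sesq.1 ?f_sesq.2 ?g_sesq.2; ring.
move=> x y; apply/eqP; rewrite -subr_eq0; apply/eqP.
exact: sesq_polar fg_sesq fg_diag x y.
Qed.

End Hilbert.

Section Forms.
Variables (R : realType) (V : lmodType R[i]) (ip : V -> V -> R[i]).
Local Notation form := (@Defs.form R V).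
Implicit Types t s r u : form.

Lemma form_eq t s : fdom t = fdom s -> (forall x y, fval t x y = fval s x y) -> t = s.
Proof.
case: t => Dt ft; case: s => Ds fs /= -> fsE.
by congr Form; apply/funext => x; apply/funext.
Qed.

Lemma form_addE t s x y : (fdom t `&` fdom s) x -> (fdom t `&` fdom s) y ->
  fval (form_add t s) x y = fval t x y + fval s x y.
Proof. by move=> Dx Dy; rewrite /= asboolT. Qed.

Lemma form_add_out t s x y : ~ ((fdom t `&` fdom s) x /\ (fdom t `&` fdom s) y) ->
  fval (form_add t s) x y = 0.
Proof. by move=> Dxy; rewrite /= asboolF //; exact: Dxy. Qed.

Lemma form_addC t s : form_add t s = form_add s t.
Proof.
apply: form_eq => [|x y]; first by rewrite /= setIC.
have [[Dx Dy]|Dxy] := pselect ((fdom t `&` fdom s) x /\ (fdom t `&` fdom s) y).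
  by rewrite form_addE // form_addE 1?setIC // addrC.
by rewrite !form_add_out // setIC.
Qed.

Lemma form_addA t s r : form_add (form_add t s) r = form_add t (form_add s r).
Proof.
apply: form_eq => [|x y]; first by rewrite /= setIA.
set D := fdom t `&` fdom s `&` fdom r.
have [[[[? ?] ?] [[? ?] ?]]|Dxy] := pselect (D x /\ D y).
  by rewrite /= !asboolT ?addrA //; do !split.
rewrite !form_add_out // => -[[? [? ?]] [? [? ?]]].
by apply: Dxy; split; split=> //; split.
Qed.

Lemma is_form_out t x y : is_form ip t -> ~ (fdom t x /\ fdom t y) -> fval t x y = 0.
Proof. by case=> _ [_ [_ [_]]]; apply. Qed.

Lemma is_form_eq t s : is_form ip t -> is_form ip s -> fdom t = fdom s ->
  (forall x y, fdom t x -> fdom t y -> fval t x y = fval s x y) -> t = s.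
Proof.
move=> t_form s_form Dts ts; apply: form_eq => // x y.
have [[Dx Dy]|Dxy] := pselect (fdom t x /\ fdom t y); first exact: ts.
by rewrite !is_form_out // -Dts.
Qed.

Lemma form_add0 t : is_form ip t -> form_add t (zero_form V) = t.
Proof.
move=> t_form; apply: form_eq => [|x y]; first by rewrite /= setIT.
have [[Dx Dy]|Dxy] := pselect (fdom t x /\ fdom t y).
  by rewrite form_addE // addr0.
rewrite form_add_out ?is_form_out // => -[[Dtx _] [Dty _]]; exact: Dxy.
Qed.

Lemma is_form_sesquilinear t : is_form ip t -> fdom t = setT -> sesquilinear (fval t).
Proof. by move=> [_ [_ [tDl [tDr _]]]] DtT; split=> a x y z; rewrite ?tDl ?tDr ?DtT. Qed.

Lemma is_form_eq0 t : is_form ip t -> fdom t = setT -> (forall x, fval t x x = 0) ->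
  t = zero_form V.
Proof.
move=> t_form DtT t0; apply: form_eq => //= x y.
exact: sesq_polar (is_form_sesquilinear t_form DtT) t0 x y.
Qed.

Lemma subspaceI (A B : set V) : subspace A -> subspace B -> subspace (A `&` B).
Proof.
move=> [A0 AZ] [B0 BZ]; split=> [|a x y [Ax Bx] [Ay By]]; first by split.
by split; [exact: AZ | exact: BZ].
Qed.

Lemma is_form_add t s : is_form ip t -> is_form ip s -> dense ip (fdom t `&` fdom s) ->
  is_form ip (form_add t s).
Proof.
move=> [t_sub [_ [tDl [tDr _]]]] [s_sub [_ [sDl [sDr _]]]] D_dense.
have D_sub := subspaceI t_sub s_sub; have [_ DZ] := D_sub.
do 3!split=> //; [|split; last exact: form_add_out].
- move=> a x y z Dx Dy Dz; have Daxy := DZ a x y Dx Dy.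
  rewrite !form_addE //.
  by case: Dx Dy Dz => ? ? [? ?] [? ?]; rewrite tDl // sDl //; ring.
- move=> a x y z Dx Dy Dz; have Dayz := DZ a y z Dy Dz.
  rewrite !form_addE //.
  by case: Dx Dy Dz => ? ? [? ?] [? ?]; rewrite tDr // sDr //; ring.
Qed.

Lemma bounded_form_add t s :
  bounded_form ip t -> bounded_form ip s -> bounded_form ip (form_add t s).
Proof.
move=> [Mt tM] [Ms sM]; exists (Mt + Ms) => x [Dtx Dsx] nx.
by rewrite form_addE // ReD lerD ?tM ?sM.
Qed.

Lemma bounded_form_le s u : fdom s `<=` fdom u ->
  (forall x, fdom s x -> Re (fval s x x) <= Re (fval u x x)) ->
  bounded_form ip u -> bounded_form ip s.
Proof.
move=> Dsu su [M uM]; exists M => x Dsx nx.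
exact: le_trans (su x Dsx) (uM x (Dsu x Dsx) nx).
Qed.

Lemma bounded_form_addr t s : positive_form t -> fdom s `<=` fdom t ->
  bounded_form ip (form_add t s) -> bounded_form ip s.
Proof.
move=> t_ge0 Dst; apply: bounded_form_le => [x Dsx|x Dsx]; first by split=> //; exact: Dst.
have Dtx := Dst x Dsx; rewrite form_addE // ReD lerDr.
exact: Re_ge0 (t_ge0 x Dtx).
Qed.

End Forms.

Section GeneralizedEffectAlgebra.
Variables (R : realType) (V : lmodType R[i]) (ip : V -> V -> R[i]).
Hypothesis ip_inner : inner_product ip.
Local Notation form := (@Defs.form R V).
Local Notation Vf := (Vf ip).
Local Notation bounded := (bounded_form ip).
Local Notation defined := (oplus_defined ip).
Implicit Types t s r : form.

Lemma Vf_bounded_dom t : Vf t -> bounded t -> fdom t = setT.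
Proof. by case=> _ [_]; apply. Qed.

Lemma Vf_zero : Vf (zero_form V).
Proof.
split; last by split=> // x _ /=.
split; first by split.
split; last by do !split=> * //=; rewrite mulr0 addr0.
move=> x e e_gt0; exists x => //.
by rewrite subrr /hnorm (sesq0l (ip_sesquilinear ip_inner)) sqrtr0.
Qed.

Lemma bounded_zero_form : bounded (zero_form V).
Proof. by exists 0. Qed.

Lemma oplus_defined_sym t s : defined t s -> defined s t.
Proof. by case=> [|[|]]; [right; left | left | right; right]. Qed.

Lemma oplus_defined_subr t s : Vf t -> defined t s -> bounded s \/ fdom s `<=` fdom t.
Proof.
move=> Vt [/(Vf_bounded_dom Vt) -> | [Bs | ->]]; by [right | left].
Qed.

Lemma dense_oplus_defined t s : Vf t -> Vf s -> defined t s ->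
  dense ip (fdom t `&` fdom s).
Proof.
move=> Vt Vs /(oplus_defined_subr Vt) [/(Vf_bounded_dom Vs) -> | /setIidr ->].
  by rewrite setIT; case: Vt => [[_ []]].
by case: Vs => [[_ []]].
Qed.

Lemma Vf_bounded_add t s : Vf t -> Vf s -> defined t s ->
  bounded (form_add t s) -> bounded t /\ bounded s.
Proof.
suff bounded_addr u v : Vf u -> defined u v -> bounded (form_add u v) -> bounded v.
  move=> Vt Vs dts Bts; split; last exact: bounded_addr Bts.
  by apply: bounded_addr Vs (oplus_defined_sym dts) _; rewrite form_addC.
move=> Vu /(oplus_defined_subr Vu) [// | Dvu].
by case: Vu => _ [u_ge0 _]; apply: bounded_form_addr.
Qed.

Lemma Vf_add t s : Vf t -> Vf s -> defined t s -> Vf (form_add t s).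
Proof.
move=> Vt Vs dts; have [[t_form [t_ge0 _]] [s_form [s_ge0 _]]] := (Vt, Vs).
split; first exact: is_form_add (dense_oplus_defined Vt Vs dts).
split=> [x [Dtx Dsx] | /(Vf_bounded_add Vt Vs dts) [Bt Bs]].
  by rewrite form_addE // addr_ge0 ?t_ge0 ?s_ge0.
by rewrite /= (Vf_bounded_dom Vt Bt) (Vf_bounded_dom Vs Bs) setIT.
Qed.

Lemma oplus_defined_addl t s r : Vf t -> Vf s -> defined t s ->
  defined (form_add t s) r -> defined t r.
Proof.
move=> Vt Vs dts [/(Vf_bounded_add Vt Vs dts) [Bt _] | [Br | Dr]].
- by left.
- by right; left.
- have [Bt | nBt] := pselect (bounded t); [by left | right; right; rewrite -{}Dr /=].
  by case: dts => [// | [/(Vf_bounded_dom Vs) -> | <-]]; rewrite ?setIT ?setIid.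
Qed.

Lemma oplus_defined_add t s r : Vf t -> Vf s ->
  defined t r -> defined s r -> defined (form_add t s) r.
Proof.
move=> Vt Vs dtr dsr; have [Br | nBr] := pselect (bounded r); first by right; left.
case: dtr => [Bt | [// | Dtr]]; case: dsr => [Bs | [// | Dsr]].
- by left; apply: bounded_form_add.
- by right; right; rewrite /= (Vf_bounded_dom Vt Bt) setTI.
- by right; right; rewrite /= (Vf_bounded_dom Vs Bs) setIT.
- by right; right; rewrite /= Dtr Dsr setIid.
Qed.

Lemma oplus_defined_assoc t s r : Vf t -> Vf s -> Vf r ->
  defined t s /\ defined (form_add t s) r <-> defined s r /\ defined t (form_add s r).
Proof.
move=> Vt Vs Vr; split=> [[dts dtsr] | [dsr dtsr]].
  have dtr := oplus_defined_addl Vt Vs dts dtsr.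
  have dsr : defined s r.
    by apply: oplus_defined_addl Vs Vt (oplus_defined_sym dts) _; rewrite form_addC.
  split=> //; apply/oplus_defined_sym/oplus_defined_add => //; exact: oplus_defined_sym.
have dsrt := oplus_defined_sym dtsr.
have dst := oplus_defined_addl Vs Vr dsr dsrt.
have drt : defined r t.
  by apply: oplus_defined_addl Vr Vs (oplus_defined_sym dsr) _; rewrite form_addC.
split; first exact: oplus_defined_sym.
by apply: oplus_defined_add => //; exact: oplus_defined_sym.
Qed.

Lemma Vf_eq_of_agree s r (A : set V) : Vf s -> Vf r -> dense ip A ->
  bounded s \/ fdom s = A -> bounded r \/ fdom r = A ->
  (forall x y, A x -> A y -> fval s x y = fval r x y) -> s = r.
Proof.
move=> Vs Vr A_dense hs hr sr.
have bounded_of_agree u v : Vf v -> fdom u = A -> bounded v ->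
    (forall x, A x -> fval u x x = fval v x x) -> bounded u.
  move=> Vv DuA Bv uv; apply: (bounded_form_le _ _ Bv) => [x _ | x].
    by rewrite (Vf_bounded_dom Vv Bv).
  by rewrite DuA => /uv ->.
have [[Bs Br] | [DsA DrA]] : (bounded s /\ bounded r) \/ (fdom s = A /\ fdom r = A).
  case: hs hr => [Bs | DsA] [Br | DrA]; [by left | | | by right].
  - by left; split=> //; apply: bounded_of_agree Vs DrA Bs _ => x Ax; rewrite sr.
  - by left; split=> //; apply: bounded_of_agree Vr DsA Br _ => x Ax; rewrite sr.
- have [[s_form [s_ge0 _]] [r_form [r_ge0 _]]] := (Vs, Vr).
  have [DsT DrT] := (Vf_bounded_dom Vs Bs, Vf_bounded_dom Vr Br).
  apply: form_eq; first by rewrite DsT DrT.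
  apply: (sesq_eq_of_dense ip_inner (is_form_sesquilinear s_form DsT)
            (is_form_sesquilinear r_form DrT) _ _ _ _ A_dense) => [x|x|||y Ay].
  + by apply: s_ge0; rewrite DsT.
  + by apply: r_ge0; rewrite DrT.
  + by case: Bs => M sM; exists M => x; apply: sM; rewrite DsT.
  + by case: Br => M rM; exists M => x; apply: rM; rewrite DrT.
  + exact: sr.
- by apply: is_form_eq Vs.1 Vr.1 _ _ => [|x y]; rewrite ?DsA ?DrA //; apply: sr.
Qed.

Lemma Vf_addI t s r : Vf t -> Vf s -> Vf r -> defined t s -> defined t r ->
  form_add t s = form_add t r -> s = r.
Proof.
move=> Vt Vs Vr dts dtr tsr.
have Dtsr : fdom t `&` fdom s = fdom t `&` fdom r.
  by rewrite -[LHS]/(fdom (form_add t s)) tsr.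
have dom_sub u : defined t u -> bounded u \/ fdom u = fdom t `&` fdom u.
  by move=> /(oplus_defined_subr Vt) [Bu | /setIidr ->]; [left | right].
apply: (Vf_eq_of_agree Vs Vr (dense_oplus_defined Vt Vs dts) (dom_sub s dts)).
  by rewrite Dtsr; apply: dom_sub.
move=> x y Dx Dy; apply: (@addrI _ (fval t x y)).
rewrite -form_addE // tsr form_addE //; by rewrite -Dtsr.
Qed.

Lemma Vf_add_eq0 t s : Vf t -> Vf s -> form_add t s = zero_form V ->
  t = zero_form V /\ s = zero_form V.
Proof.
move=> [t_form [t_ge0 _]] [s_form [s_ge0 _]] ts0.
have DtsT : fdom t `&` fdom s = setT by rewrite -[LHS]/(fdom (form_add t s)) ts0.
have Dts x : (fdom t `&` fdom s) x by rewrite DtsT.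
have DtT : fdom t = setT by apply/seteqP; split=> // x _; case: (Dts x).
have DsT : fdom s = setT by apply/seteqP; split=> // x _; case: (Dts x).
have ts_diag x : fval t x x + fval s x x = 0 by rewrite -form_addE // ts0.
have t0 x : fval t x x = 0.
  apply/eqP; move/eqP: (ts_diag x).
  by rewrite paddr_eq0 ?t_ge0 ?s_ge0 ?DtT ?DsT // => /andP[].
have s0 x : fval s x x = 0 by have := ts_diag x; rewrite t0 add0r.
split; [exact: is_form_eq0 t_form DtT t0 | exact: is_form_eq0 s_form DsT s0].
Qed.

End GeneralizedEffectAlgebra.

Theorem theorem4p5 (R : realType) (V : lmodType R[i]) (ip : V -> V -> R[i])
  (hH : inf_dim_complex_hilbert ip) :
  gen_effect_algebra (Vf ip) (oplus_defined ip) (@form_add R V)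
    (zero_form V).
Proof.
have [ip_inner _] := hH.
split; first exact: Vf_zero.
split; first exact: Vf_add.
split; first by move=> t s _ _ dts; split; [exact: oplus_defined_sym | exact: form_addC].
split.
  move=> t s r Vt Vs Vr defd; have [to_r to_l] := oplus_defined_assoc Vt Vs Vr.
  by case: defd => [h | h]; [move: h (to_r h) | move: h (to_l h)] => -[? ?] [? ?];
    do !split=> //; exact: form_addA.
split.
  move=> t [t_form _]; split; last exact: form_add0 t_form.
  by right; left; exact: bounded_zero_form.
split; first exact: Vf_addI.
by move=> t s Vt Vs _; exact: (Vf_add_eq0 Vt Vs).
Qed.
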